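(* Let $A=\mathbb{C}[x,y,z]$, let $s,t\in A\setminus\{0\}$ be coprime and equip $A$ with the Poisson bracket $\{x,y\}=t s_z-s t_z$, $\{y,z\}=t s_x-s t_x$, $\{z,x\}=t s_y-s t_y$. Let $p=(\alpha,\beta,\gamma)\in\mathbb{C}^3$ and $M=\langle x-\alpha,y-\beta,z-\gamma\rangle$. Then $M$ is a Poisson ideal if and only if either (1) $p$ is a common zero of $s$ and $t$, or (2) $p$ is a singular point of $f_{\lambda,\mu}:=\lambda s-\mu t$ for some $(\lambda,\mu)\in\mathbb{P}^1(\mathbb{C})$.
   Context: Subscripts denote partial derivatives. $p$ is a singular point of $f$ means $f(p)=f_x(p)=f_y(p)=f_z(p)=0$. An ideal $I$ is Poisson if $\{a,I\}\subseteq I$ for all $a\in A$. *)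

From HB Require Import structures.
From mathcomp Require Import all_boot all_order all_algebra.
From mathcomp Require Import reals complex.
From mathcomp Require Import mpoly.
Set Implicit Arguments. Unset Strict Implicit. Unset Printing Implicit Defensive.
Import Order.TTheory GRing.Theory Num.Theory.
Local Open Scope ring_scope.

Definition CC (R : realType) := complex R.

Section Defs.
Variable (F : comRingType).
Local Notation A := {mpoly F[3]}.

Definition vx : 'I_3 := ord0.
Definition vy : 'I_3 := inord 1.
Definition vz : 'I_3 := inord 2.

Definition dx (a : A) : A := a^`M(vx).
Definition dy (a : A) : A := a^`M(vy).
Definition dz (a : A) : A := a^`M(vz).

(* The Poisson bracket on A with {x,y} = t s_z - s t_z, {y,z} = t s_x - s t_x,
   {z,x} = t s_y - s t_y, extended to A as a biderivation. *)
Definition pbr (s t : A) (a b : A) : A :=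
  (dx a * dy b - dy a * dx b) * (t * dz s - s * dz t)
+ (dy a * dz b - dz a * dy b) * (t * dx s - s * dx t)
+ (dz a * dx b - dx a * dz b) * (t * dy s - s * dy t).

Definition mdivides (d a : A) : Prop := exists q : A, a = q * d.
Definition mcoprime (s t : A) : Prop :=
  forall d : A, mdivides d s -> mdivides d t -> exists c : F, c != 0 /\ d = c%:MP.

Definition pt (al be ga : F) : 'I_3 -> F := fun i => [:: al; be; ga]`_i.
Definition in_max_ideal (al be ga : F) (m : A) : Prop :=
  exists c1 c2 c3 : A,
    m = c1 * ('X_vx - al%:MP) + c2 * ('X_vy - be%:MP) + c3 * ('X_vz - ga%:MP).

Definition poisson_ideal (br : A -> A -> A) (I : A -> Prop) : Prop :=
  forall a m, I m -> I (br a m).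

Definition singular_point (f : A) (p : 'I_3 -> F) : Prop :=
  f.@[p] = 0 /\ (dx f).@[p] = 0 /\ (dy f).@[p] = 0 /\ (dz f).@[p] = 0.
End Defs.

From HB Require Import structures.
From mathcomp Require Import all_boot all_order all_algebra.
From mathcomp Require Import reals complex.
From mathcomp Require Import mpoly ring.
Import Order.TTheory GRing.Theory Num.Theory.
Local Open Scope ring_scope.

(** M consists of the polynomials vanishing at p, and the bracket is a
    biderivation with [{x_j, x_k} = t s_i - s t_i]; so M is Poisson iff
    [t(p) grad s(p) = s(p) grad t(p)].  Unless [s(p) = t(p) = 0], this says
    exactly that [t(p) s - s(p) t] is singular at p.  Conversely, if
    [la s - mu t] is singular at p, then [(s(p), grad s(p))] and
    [(t(p), grad t(p))] are both proportional to [(mu, la)], so all their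
    2x2 minors vanish. *)

Lemma val_vy : val vy = 1%N. Proof. exact: inordK. Qed.
Lemma val_vz : val vz = 2%N. Proof. exact: inordK. Qed.

Lemma ord3P (i : 'I_3) : [\/ i = vx, i = vy | i = vz].
Proof.
case: i => [[|[|[|k]]] lt_i3]; [apply: Or31 | apply: Or32 | apply: Or33 | by []];
  by apply: val_inj; rewrite /= ?val_vy ?val_vz.
Qed.

Lemma mderivXU (F : comRingType) n (i j : 'I_n) :
  ('X_j : {mpoly F[n]})^`M(i) = (j == i)%:R.
Proof.
rewrite mderivX mnm1E; case: eqP => [->|_]; last by rewrite scale0r.
have -> : (U_(i) - U_(i))%MM = 0%MM by apply/mnmP => k; rewrite mnmBE mnm0E subnn.
by rewrite mpolyX0 scale1r.
Qed.

Section MaxIdeal.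
Variables (F : comRingType) (al be ga : F).
Local Notation M := (in_max_ideal al be ga).
Local Notation p := (pt al be ga).

Lemma pt_vx : p vx = al. Proof. by []. Qed.
Lemma pt_vy : p vy = be. Proof. by rewrite /pt /vy inordK. Qed.
Lemma pt_vz : p vz = ga. Proof. by rewrite /pt /vz inordK. Qed.

Lemma in_max_ideal0 : M 0.
Proof. by exists 0, 0, 0; rewrite !mul0r !addr0. Qed.

Lemma in_max_idealD a b : M a -> M b -> M (a + b).
Proof.
move=> [a1 [a2 [a3 ->]]] [b1 [b2 [b3 ->]]].
by exists (a1 + b1), (a2 + b2), (a3 + b3); ring.
Qed.

Lemma in_max_idealMl c a : M a -> M (c * a).
Proof.
move=> [a1 [a2 [a3 ->]]].
by exists (c * a1), (c * a2), (c * a3); rewrite !mulrDr !mulrA.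
Qed.

Lemma in_max_ideal_XsubC i : M ('X_i - (p i)%:MP).
Proof.
case: (ord3P i) => ->; rewrite ?pt_vx ?pt_vy ?pt_vz.
- by exists 1, 0, 0; rewrite mul1r !mul0r !addr0.
- by exists 0, 1, 0; rewrite mul1r !mul0r add0r addr0.
- by exists 0, 0, 1; rewrite mul1r !mul0r !add0r.
Qed.

Lemma meval_in_max_ideal m : M m -> m.@[p] = 0.
Proof.
move=> [a1 [a2 [a3 ->]]].
rewrite !mevalD !mevalM !mevalB !mevalXU !mevalC pt_vx pt_vy pt_vz.
by rewrite !subrr !mulr0 !addr0.
Qed.

Lemma in_max_ideal_subC f : M (f - (f.@[p])%:MP).
Proof.
pose centered g := M (g - (g.@[p])%:MP).
have centeredC c : centered c%:MP by rewrite /centered mevalC subrr; apply: in_max_ideal0.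
have centeredD g h : centered g -> centered h -> centered (g + h).
  rewrite /centered mevalD mpolyCD opprD addrACA.
  exact: in_max_idealD.
have centeredM g h : centered g -> centered h -> centered (g * h).
  move=> cg ch; rewrite /centered mevalM mpolyCM.
  have -> : g * h - (g.@[p])%:MP * (h.@[p])%:MP =
      h * (g - (g.@[p])%:MP) + (g.@[p])%:MP * (h - (h.@[p])%:MP) by ring.
  by apply: in_max_idealD; apply: in_max_idealMl.
have centeredX m : centered 'X_[m].
  rewrite mpolyXE_id; elim/big_ind: _ => [||i _]; [exact: (centeredC 1)|exact: centeredM|].
  elim: (m i) => [|k IHk]; first exact: (centeredC 1).
  rewrite exprS; apply: centeredM => //.
  by rewrite /centered mevalXU; apply: in_max_ideal_XsubC.
elim/mpolyind: f => [|c m g _ _ cg]; first exact: (centeredC 0).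
by rewrite -mul_mpolyC; apply: centeredD => //; apply: centeredM.
Qed.

Lemma in_max_idealP f : M f <-> f.@[p] = 0.
Proof.
split; first exact: meval_in_max_ideal.
by move=> f0; have := in_max_ideal_subC f; rewrite f0 subr0.
Qed.

Definition pbr_coef (i : 'I_3) (s t : {mpoly F[3]}) := t * s^`M(i) - s * t^`M(i).

Variables s t : {mpoly F[3]}.

Lemma pbr_coordinates c : [/\ pbr s t 'X_vx ('X_vy - c%:MP) = pbr_coef vz s t,
                              pbr s t 'X_vy ('X_vz - c%:MP) = pbr_coef vx s t &
                              pbr s t 'X_vz ('X_vx - c%:MP) = pbr_coef vy s t].
Proof.
have [nxy nxz nyz] : [/\ (vx == vy) = false, (vx == vz) = false & (vy == vz) = false].
  by rewrite -!val_eqE /= val_vy val_vz.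
rewrite /pbr /pbr_coef /dx /dy /dz !mderivB !mderivC !mderivXU !eqxx.
rewrite ![(_ == vx)]eq_sym ![(vz == _)]eq_sym nxy nxz nyz /=.
by split; ring.
Qed.

Lemma meval_pbr_coef i q :
  (pbr_coef i s t).@[q] = t.@[q] * (s^`M(i)).@[q] - s.@[q] * (t^`M(i)).@[q].
Proof. by rewrite mevalB !mevalM. Qed.

Lemma poisson_max_idealP :
  poisson_ideal (pbr s t) M <->
  forall i, t.@[p] * (s^`M(i)).@[p] = s.@[p] * (t^`M(i)).@[p].
Proof.
split=> [PM i | coef0 a m _].
  have Mbr j a : M (pbr s t a ('X_j - (p j)%:MP)).
    exact/PM/in_max_ideal_XsubC.
  case: (ord3P i) => ->; apply/subr0_eq; rewrite -meval_pbr_coef;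
    apply: meval_in_max_ideal.
  - by have [_ <- _] := pbr_coordinates (p vz); apply: Mbr.
  - by have [_ _ <-] := pbr_coordinates (p vx); apply: Mbr.
  - by have [<- _ _] := pbr_coordinates (p vy); apply: Mbr.
have M_coef j : M (pbr_coef j s t).
  by apply/in_max_idealP; rewrite meval_pbr_coef coef0 subrr.
rewrite /pbr -!/(pbr_coef _ s t).
by apply: in_max_idealD; [apply: in_max_idealD|]; apply: in_max_idealMl.
Qed.

End MaxIdeal.

Lemma proportional_mulrC (F : idomainType) (la mu a b c d : F) :
  la != 0 \/ mu != 0 -> la * a = mu * b -> la * c = mu * d -> b * c = a * d.
Proof.
move=> [nz|nz] hab hcd; apply: (mulfI nz); apply: (mulfI nz).
- transitivity ((la * b) * (la * c)); first by ring.
  rewrite hcd; transitivity ((la * a) * (la * d)); last by ring.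
  by rewrite hab; ring.
- transitivity ((mu * b) * (mu * c)); first by ring.
  rewrite -hab; transitivity ((mu * a) * (mu * d)); last by ring.
  by rewrite -hcd; ring.
Qed.

Lemma cross_eq_pencilP (F : idomainType) (I : Type) (s0 t0 : F) (a b : I -> F) :
  (forall i, t0 * a i = s0 * b i) <->
  (s0 = 0 /\ t0 = 0) \/
  exists la mu, (la != 0 \/ mu != 0) /\ la * s0 = mu * t0 /\
                forall i, la * a i = mu * b i.
Proof.
split=> [cross | [[-> ->] i | [la [mu [nz [h0 h]]]] i]].
- have [/andP[/eqP -> /eqP ->] | nz] := boolP ((s0 == 0) && (t0 == 0)); first by left.
  right; exists t0, s0; split; last by rewrite mulrC.
  by move: nz; rewrite negb_and => /orP[]; [right | left].
- by rewrite !mul0r.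
- exact: proportional_mulrC nz h0 (h i).
Qed.

Lemma singular_point_pencilP (F : comRingType) (s t : {mpoly F[3]}) q la mu :
  singular_point (la *: s - mu *: t) q <->
  la * s.@[q] = mu * t.@[q] /\
  forall i, la * (s^`M(i)).@[q] = mu * (t^`M(i)).@[q].
Proof.
rewrite /singular_point /dx /dy /dz !mderivB !mderivZ !mevalB !mevalZ.
split=> [[/subr0_eq h0 [/subr0_eq hx [/subr0_eq hy /subr0_eq hz]]] | [h0 h]].
  by split=> // i; case: (ord3P i) => ->.
by rewrite h0 !h !subrr.
Qed.

Theorem lemma3p5 (R : realType) (s t : {mpoly CC R[3]}) (al be ga : CC R) :
  s != 0 -> t != 0 -> mcoprime s t ->
  (poisson_ideal (pbr s t) (in_max_ideal al be ga) <->
   ((s.@[pt al be ga] = 0 /\ t.@[pt al be ga] = 0) \/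
    (exists la mu : CC R, (la != 0 \/ mu != 0) /\
       singular_point (la *: s - mu *: t) (pt al be ga)))).
Proof.
move=> _ _ _; rewrite poisson_max_idealP cross_eq_pencilP.
apply: or_iff_compat_l.
by split=> -[la [mu [nz h]]]; exists la, mu; split=> //; apply/singular_point_pencilP.
Qed.
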